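(* Let $p,q$ be distributions on $[n]$ and $m_1,m_2>0$. Let $X_i\sim\mathrm{Poisson}(m_1p_i)$ and $Y_i\sim\mathrm{Poisson}(m_2q_i)$, $i\in[n]$, all mutually independent, and let $$Z_i=\frac{(m_2X_i-m_1Y_i)^2-(m_2^2X_i+m_1^2Y_i)}{X_i+Y_i}$$ (with $Z_i=0$ when $X_i+Y_i=0$). For $A\subseteq[n]$, if $p=q$ then $\mathbb E\left[\sum_{i\in A}Z_i\right]=0$, and in general $$\mathbb E\left[\sum_{i\in A}Z_i\right]\geq\frac{m_1^2m_2^2\left(\sum_{i\in A}|p_i-q_i|\right)^2}{4n+m_1+m_2}.$$ *)

From HB Require Import structures.
From mathcomp Require Import all_boot all_order all_algebra.
From mathcomp Require Import all_classical all_reals all_analysis.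
Set Implicit Arguments. Unset Strict Implicit. Unset Printing Implicit Defensive.
Import Order.TTheory GRing.Theory Num.Theory.
Local Open Scope classical_set_scope.
Local Open Scope ring_scope.

Definition is_distribution (R : realType) (n : nat) (p : 'I_n -> R) : Prop :=
  (forall i, 0 <= p i) /\ \sum_(i < n) p i = 1.

Definition mutually_independent d (T : measurableType d) (R : realType)
    (P : probability T R) (I : finType) (V : I -> {RV P >-> nat}) : Prop :=
  forall (J : {set I}) (B : I -> set nat),
    (forall j, measurable (B j)) ->
    P (\bigcap_(j in [set` J]) (V j @^-1` B j)) =
    (\prod_(j in J) P (V j @^-1` B j))%E.

(* X has the Poisson distribution with mean r (r >= 0; r = 0 gives X = 0 a.s.) *)
Definition has_poisson_law d (T : measurableType d) (R : realType)
    (P : probability T R) (r : R) (X : {RV P >-> nat}) : Prop :=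
  forall U : set nat, measurable U -> distribution P X U = poisson_prob r 0%N U.

Definition Zstat (R : realType) (m1 m2 : R) (x y : nat) : R :=
  if (x + y)%N == 0%N then 0
  else ((m2 * x%:R - m1 * y%:R) ^+ 2 - (m2 ^+ 2 * x%:R + m1 ^+ 2 * y%:R))
       / (x + y)%:R.

From HB Require Import structures.
From mathcomp Require Import all_boot all_order all_algebra.
From mathcomp Require Import all_classical all_reals all_analysis.
From mathcomp Require Import measurable_realfun ring lra.
Import Order.TTheory GRing.Theory Num.Theory.
Set Implicit Arguments. Unset Strict Implicit. Unset Printing Implicit Defensive.
Local Open Scope classical_set_scope.
Local Open Scope ring_scope.

(* Fix i and write a = m1 p_i, b = m2 q_i, so that X_i and Y_i are independent Poisson(a)
   and Poisson(b).  Since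
     (m2 x - m1 y)^2 - (m2^2 x + m1^2 y) = m2^2 x(x-1) - 2 m1 m2 x y + m1^2 y(y-1)
   and the Poisson masses satisfy (x+1) u(x+1) = a u(x), summing over the antidiagonal
   x + y = t + 2 gives E[Z_i; X_i + Y_i = t + 2] = (m2 a - m1 b)^2 P(T = t) / (t + 2), where
   T = X_i + Y_i ~ Poisson(a + b).  Hence E[Z_i] = (m2 a - m1 b)^2 E[1 / (T + 2)], which
   vanishes when p = q, and E[1 / (T + 2)] >= 1 / (a + b + 2) by Jensen's inequality.
   Finally, with v_i = a + b + 2, Cauchy-Schwarz gives
     sum_A (m2 a - m1 b)^2 / v_i >= m1^2 m2^2 (sum_A |p_i - q_i|)^2 / sum_A v_i,
   and sum_A v_i <= m1 + m2 + 2n. *)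

Section poisson_mass.
Variable R : realType.

(* [poisson_pmf 0] is the constant 1, not the Dirac mass at 0. *)
Definition poisson_mass (r : R) (x : nat) : R :=
  if 0 < r then poisson_pmf r x else (x == 0)%:R.

Lemma poisson_mass_ge0 r x : 0 <= poisson_mass r x.
Proof. by rewrite /poisson_mass; case: ifP => _; rewrite ?poisson_pmf_ge0 ?ler0n. Qed.

Lemma poisson_massS r : 0 <= r ->
  forall x, x.+1%:R * poisson_mass r x.+1 = r * poisson_mass r x.
Proof.
rewrite /poisson_mass le_eqVlt => /orP[/eqP <-|r_gt0] x; first by rewrite ltxx !mul0r mulr0.
rewrite r_gt0 /poisson_pmf r_gt0 factS natrM exprS invfM.
have fact_neq0 : (x`!%:R : R) != 0 by rewrite pnatr_eq0 -lt0n fact_gt0.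
by field; rewrite fact_neq0 addrC natr1 pnatr_eq0.
Qed.

Lemma poisson_mass0 r : 0 <= r -> poisson_mass r 0 = expR (- r).
Proof.
rewrite le_eqVlt /poisson_mass => /orP[/eqP <-|r_gt0]; first by rewrite ltxx oppr0 expR0.
by rewrite r_gt0 /poisson_pmf r_gt0 expr0 invr1 !mul1r.
Qed.

Lemma poisson_mass_sum1 r : 0 <= r ->
  (\sum_(t <oo) (poisson_mass r t)%:E = 1)%E.
Proof.
have mass_ge0 (r' : R) t : (0 <= (poisson_mass r' t)%:E)%E by rewrite lee_fin poisson_mass_ge0.
rewrite le_eqVlt => /orP[/eqP <-|r_gt0].
  rewrite (@nneseriesD1 _ _ 0%N) // eseries0 ?adde0 /poisson_mass ?ltxx //.
  by move=> t _ /andP[_ /negbTE ->].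
rewrite -(probability_setT (poisson_prob r 0)) /= /poisson_prob r_gt0.
rewrite -nneseries_esumT => [|t]; last by rewrite lee_fin poisson_pmf_ge0.
by rewrite /poisson_mass r_gt0.
Qed.

End poisson_mass.

Section convolution.
Variable R : realType.

Definition convol (u v : nat -> R) t := \sum_(x < t.+1) u x * v (t - x)%N.

Lemma big_antidiag_swap (F : nat -> nat -> R) t :
  \sum_(x < t.+1) F x (t - x)%N = \sum_(x < t.+1) F (t - x)%N x.
Proof.
rewrite (reindex_inj rev_ord_inj); apply: eq_bigr => x _ /=.
by rewrite subSS subKn // -ltnS.
Qed.

Lemma convolC u v t : convol u v t = convol v u t.
Proof.
rewrite /convol (big_antidiag_swap (fun x y => u x * v y)).
by apply: eq_bigr => x _; rewrite mulrC.
Qed.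

Section falling_moment.
Variables (u v : nat -> R) (a : R).
Hypothesis uS : forall x, x.+1%:R * u x.+1 = a * u x.

Lemma convol_falling2l t :
  \sum_(x < t.+3) x%:R * (x%:R - 1) * u x * v (t.+2 - x)%N = a ^+ 2 * convol u v t.
Proof.
rewrite 2!big_ord_recl /= !mul0r subrr mulr0 !mul0r !add0r /convol mulr_sumr.
apply: eq_bigr => x _; rewrite /bump /= !add1n !subSS.
have -> : (x.+2%:R : R) - 1 = x.+1%:R by rewrite -[x.+2]addn1 natrD addrK.
have -> : x.+2%:R * x.+1%:R * u x.+2 = x.+1%:R * (x.+2%:R * u x.+2) by ring.
by rewrite uS mulrCA uS; ring.
Qed.

End falling_moment.

Variables (u v : nat -> R) (a b : R).
Hypothesis uS : forall x, x.+1%:R * u x.+1 = a * u x.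
Hypothesis vS : forall y, y.+1%:R * v y.+1 = b * v y.

Lemma convol_falling2r t :
  \sum_(x < t.+3) (t.+2 - x)%N%:R * ((t.+2 - x)%N%:R - 1) * u x * v (t.+2 - x)%N =
  b ^+ 2 * convol u v t.
Proof.
rewrite (big_antidiag_swap (fun x y => y%:R * (y%:R - 1) * u x * v y)) convolC.
rewrite -(convol_falling2l u vS).
by apply: eq_bigr => x _; ring.
Qed.

Lemma convol_cross t :
  \sum_(x < t.+3) x%:R * (t.+2 - x)%N%:R * u x * v (t.+2 - x)%N = a * b * convol u v t.
Proof.
rewrite big_ord_recl big_ord_recr /= subnn !mul0r mulr0 !mul0r add0r addr0.
rewrite /convol mulr_sumr; apply: eq_bigr => x _; rewrite /bump /= add1n subSS.
rewrite subSn; last by rewrite -ltnS.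
have -> : x.+1%:R * (t - x).+1%:R * u x.+1 * v (t - x).+1 =
  (x.+1%:R * u x.+1) * ((t - x).+1%:R * v (t - x).+1) by ring.
by rewrite uS vS; ring.
Qed.

Lemma convolS t : t.+1%:R * convol u v t.+1 = (a + b) * convol u v t.
Proof.
have -> : t.+1%:R * convol u v t.+1 =
    \sum_(x < t.+2) x%:R * u x * v (t.+1 - x)%N +
    \sum_(x < t.+2) (t.+1 - x)%N%:R * u x * v (t.+1 - x)%N.
  rewrite /convol mulr_sumr -big_split; apply: eq_bigr => x _ /=.
  have x_le : (x <= t.+1)%N by rewrite -ltnS.
  by rewrite -{1}(subnKC x_le) natrD; ring.
rewrite big_ord_recl [X in _ + X]big_ord_recr /= subnn !mul0r add0r addr0 mulrDl.
congr (_ + _); rewrite /convol mulr_sumr; apply: eq_bigr => x _.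
  by rewrite /bump /= add1n subSS uS mulrA.
rewrite /= subSn; last by rewrite -ltnS.
by rewrite -mulrA [_ * (_ * _)]mulrCA vS; ring.
Qed.

Definition Zstat_convol (m1 m2 : R) t :=
  \sum_(x < t.+1) Zstat m1 m2 x (t - x)%N * u x * v (t - x)%N.

Lemma Zstat_convol0 m1 m2 : Zstat_convol m1 m2 0 = 0.
Proof. by rewrite /Zstat_convol big_ord1 /Zstat /= !mul0r. Qed.

Lemma Zstat_convol1 m1 m2 : Zstat_convol m1 m2 1 = 0.
Proof.
rewrite /Zstat_convol big_ord_recl big_ord1 /Zstat /= /bump /=.
by rewrite !mulr0 !mulr1 !subr0 !add0r !addr0 sqrrN expr2 subrr; ring.
Qed.

Lemma Zstat_convolSS m1 m2 t :
  Zstat_convol m1 m2 t.+2 = (m2 * a - m1 * b) ^+ 2 * (convol u v t / t.+2%:R).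
Proof.
have t2_gt0 : 0 < t.+2%:R :> R by rewrite ltr0Sn.
have -> : Zstat_convol m1 m2 t.+2 =
  (m2 ^+ 2 * \sum_(x < t.+3) x%:R * (x%:R - 1) * u x * v (t.+2 - x)%N
   - 2 * m1 * m2 * \sum_(x < t.+3) x%:R * (t.+2 - x)%N%:R * u x * v (t.+2 - x)%N
   + m1 ^+ 2 * \sum_(x < t.+3)
       (t.+2 - x)%N%:R * ((t.+2 - x)%N%:R - 1) * u x * v (t.+2 - x)%N) / t.+2%:R.
  rewrite !mulr_sumr -sumrB -big_split mulr_suml; apply: eq_bigr => x _ /=.
  rewrite /Zstat subnKC /=; last by rewrite -ltnS.
  by field; rewrite gt_eqF.
rewrite (convol_falling2l v uS) convol_cross convol_falling2r.
by field; rewrite gt_eqF.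
Qed.

End convolution.

Lemma convol_poisson_mass (R : realType) (a b : R) : 0 <= a -> 0 <= b ->
  convol (poisson_mass a) (poisson_mass b) =1 poisson_mass (a + b).
Proof.
move=> a_ge0 b_ge0; elim=> [|t IHt].
  rewrite /convol big_ord1 !poisson_mass0 ?addr_ge0 //.
  by rewrite -expRD opprD.
apply: (mulfI (_ : t.+1%:R != 0 :> R)); first by rewrite pnatr_eq0.
rewrite (convolS (poisson_massS a_ge0) (poisson_massS b_ge0)) IHt.
by rewrite poisson_massS // addr_ge0.
Qed.

Lemma inv_add2_tangent (R : realFieldType) (lam t : R) : 0 <= lam -> 0 <= t ->
  (2 * lam + 2) / (lam + 2) ^+ 2 <= (t + 2)^-1 + t / (lam + 2) ^+ 2.
Proof.
move=> lam_ge0 t_ge0; rewrite -subr_ge0.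
have -> : (t + 2)^-1 + t / (lam + 2) ^+ 2 - (2 * lam + 2) / (lam + 2) ^+ 2 =
    (t - lam) ^+ 2 / ((t + 2) * (lam + 2) ^+ 2).
  by field; rewrite !gt_eqF //; lra.
by rewrite divr_ge0 ?sqr_ge0 // mulr_ge0 ?sqr_ge0 //; lra.
Qed.

Section probability_sequence.
Variable R : realType.
Local Open Scope ereal_scope.

Lemma nneseries_recl_shift (f : nat -> \bar R) : (forall k, 0 <= f k) ->
  \sum_(k <oo) f k = f 0%N + \sum_(k <oo) f k.+1.
Proof.
move=> f_ge0; rewrite nneseries_recl // -nneseries_addn //.
by congr (_ + _); apply: eq_eseriesr => k _; rewrite addn1.
Qed.

Variable C : nat -> R.
Hypothesis C_ge0 : forall t, (0 <= C t)%R.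
Hypothesis C_sum1 : \sum_(t <oo) (C t)%:E = 1.

Lemma nneseries_scale_mass (c : R) : (0 <= c)%R -> \sum_(t <oo) (c * C t)%:E = c%:E.
Proof.
move=> c_ge0; under eq_eseriesr do rewrite EFinM.
by rewrite nneseriesZl /= ?C_sum1 ?mule1 // => t _; rewrite lee_fin.
Qed.

Lemma mean_recurrence (lam : R) : (forall t, t.+1%:R * C t.+1 = lam * C t)%R ->
  (0 <= lam)%R -> \sum_(t <oo) (t%:R * C t)%:E = lam%:E.
Proof.
move=> CS lam_ge0; rewrite nneseries_recl_shift; last by move=> t; rewrite lee_fin mulr_ge0.
by rewrite mul0r add0e; under eq_eseriesr do rewrite CS; exact: nneseries_scale_mass.
Qed.

Definition inv_add2_mean := \sum_(t <oo) (C t / t.+2%:R)%:E.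

Lemma inv_add2_mean_le1 : inv_add2_mean <= 1.
Proof.
rewrite -C_sum1; apply: lee_nneseries => t _; first by rewrite lee_fin divr_ge0.
by rewrite lee_fin ler_pdivrMr ?ltr0Sn // ler_peMr // ler1n.
Qed.

Lemma inv_add2_mean_ge (lam : R) : (0 <= lam)%R ->
  \sum_(t <oo) (t%:R * C t)%:E = lam%:E -> ((lam + 2)^-1)%:E <= inv_add2_mean.
Proof.
move=> lam_ge0 C_mean; set k := ((lam + 2) ^+ 2)%R.
have k_gt0 : (0 < k)%R by rewrite exprn_gt0 //; lra.
have jensen : \sum_(t <oo) ((2 * lam + 2) / k * C t)%:E <=
    \sum_(t <oo) ((C t / t.+2%:R)%:E + (k^-1 * (t%:R * C t))%:E).
  apply: lee_nneseries => t _; first by rewrite lee_fin mulr_ge0 ?divr_ge0 //; lra.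
  rewrite -EFinD lee_fin.
  have -> : (C t / t.+2%:R + k^-1 * (t%:R * C t) =
      C t * ((t%:R + 2)^-1 + t%:R / k))%R by rewrite -addn2 natrD; ring.
  by rewrite mulrC ler_wpM2l // inv_add2_tangent.
rewrite nneseries_scale_mass in jensen; last by rewrite divr_ge0 ?ltW //; lra.
rewrite nneseriesD in jensen; last 2 first.
- by move=> t _ _; rewrite lee_fin divr_ge0.
- by move=> t _ _; rewrite lee_fin !mulr_ge0 // invr_ge0 ltW.
have mean_k : \sum_(t <oo) (k^-1 * (t%:R * C t))%:E = (k^-1 * lam)%:E.
  under eq_eseriesr do rewrite EFinM.
  by rewrite nneseriesZl /= ?C_mean -?EFinM // => t _; rewrite lee_fin mulr_ge0.
rewrite mean_k in jensen.
have -> : ((lam + 2)^-1 = (2 * lam + 2) / k - k^-1 * lam)%R.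
  by rewrite /k; field; rewrite gt_eqF //; lra.
by rewrite EFinB leeBlDr.
Qed.

Lemma nneseries_shift2 (D : R) (g : nat -> R) : (0 <= D)%R ->
  g 0%N = 0%R -> g 1%N = 0%R -> (forall t, g t.+2 = D * (C t / t.+2%:R))%R ->
  \sum_(t <oo) (g t)%:E = D%:E * inv_add2_mean.
Proof.
move=> D_ge0 g0 g1 gSS.
have g_ge0 t : (0 <= g t)%R by case: t => [|[|t]]; rewrite ?g0 ?g1 ?gSS ?mulr_ge0 ?divr_ge0.
rewrite nneseries_recl_shift => [|t]; last by rewrite lee_fin.
rewrite nneseries_recl_shift => [|t]; last by rewrite lee_fin.
rewrite g0 g1 !add0e; under eq_eseriesr do rewrite gSS EFinM.
by rewrite nneseriesZl // => t _; rewrite lee_fin divr_ge0.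
Qed.

End probability_sequence.

Definition poisson_inv_add2 (R : realType) (lam : R) : R :=
  fine (inv_add2_mean (poisson_mass lam)).

Lemma poisson_inv_add2E (R : realType) (lam : R) : 0 <= lam ->
  (poisson_inv_add2 lam)%:E = inv_add2_mean (poisson_mass lam).
Proof.
move=> lam_ge0; rewrite fineK // ge0_fin_numE.
  apply: (le_lt_trans (inv_add2_mean_le1 (@poisson_mass_ge0 _ _) (poisson_mass_sum1 lam_ge0))).
  exact: ltry.
by apply: nneseries_ge0 => t _ _; rewrite lee_fin divr_ge0 ?poisson_mass_ge0.
Qed.

Lemma poisson_inv_add2_ge (R : realType) (lam : R) : 0 <= lam ->
  (lam + 2)^-1 <= poisson_inv_add2 lam.
Proof.
move=> lam_ge0; rewrite -lee_fin poisson_inv_add2E //.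
have mass_ge0 := @poisson_mass_ge0 _ lam; have mass_sum1 := poisson_mass_sum1 lam_ge0.
apply: (inv_add2_mean_ge mass_ge0 mass_sum1 lam_ge0).
exact: (mean_recurrence mass_ge0 mass_sum1 (poisson_massS lam_ge0) lam_ge0).
Qed.

Section pair_of_counts.
Context d (T : measurableType d) (R : realType) (P : probability T R).
Variables (X Y : {RV P >-> nat}) (f : nat -> nat -> R).

Definition pair_event x y := X @^-1` [set x] `&` Y @^-1` [set y].

Hypothesis XY_mass : forall x y, P (pair_event x y) = (f x y)%:E.

Lemma measurable_pair_event x y : measurable (pair_event x y).
Proof. by apply: measurableI; exact: measurable_funPTI. Qed.

Lemma indic_pair_event x y w :
  \1_(pair_event x y) w = ((X w == x) && (Y w == y))%:R :> R.
Proof.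
rewrite indicE; have [[/= Xw Yw]|Exy] := pselect (pair_event x y w).
  by rewrite mem_set // Xw Yw !eqxx.
by rewrite memNset //; do 2 case: eqP => // ?; case: Exy.
Qed.

Lemma antidiag_indic (g : nat -> nat -> R) t w :
  (\sum_(x < t.+1) (g x (t - x)%N * \1_(pair_event x (t - x)%N) w)%:E)%E =
  if t == (X w + Y w)%N then (g (X w) (Y w))%:E else 0%E.
Proof.
case: eqP => [->|t_neq].
  have Xw_lt : (X w < (X w + Y w).+1)%N by rewrite ltnS leq_addr.
  rewrite (bigD1 (Ordinal Xw_lt)) //= big1 ?adde0 => [|x x_neq].
    by rewrite indic_pair_event addKn !eqxx mulr1.
  rewrite indic_pair_event; case: eqP => [Xw_eq|_]; last by rewrite mulr0.
  by case/eqP: x_neq; apply: val_inj.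
apply: big1 => x _; rewrite indic_pair_event.
case: eqP => [Xw_eq|_]; last by rewrite mulr0.
case: eqP => [Yw_eq|_]; last by rewrite mulr0.
by case: t_neq; rewrite Xw_eq Yw_eq subnKC // -ltnS.
Qed.

Lemma fun_pair_nneseries (g : nat -> nat -> R) w : (forall x y, 0 <= g x y) ->
  (g (X w) (Y w))%:E =
  (\sum_(t <oo) \sum_(x < t.+1) (g x (t - x)%N * \1_(pair_event x (t - x)%N) w)%:E)%E.
Proof.
move=> g_ge0; under eq_eseriesr do rewrite antidiag_indic.
rewrite (@nneseriesD1 _ _ (X w + Y w)%N) // ?eqxx ?eseries0 ?adde0 //.
  by move=> t _ /andP[_ /negbTE ->].
by move=> t _; case: ifP; rewrite ?lee_fin.
Qed.

Lemma measurable_fun_pair_terms (g : nat -> nat -> R) t :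
  measurable_fun [set: T] (fun w =>
    \sum_(x < t.+1) (g x (t - x)%N * \1_(pair_event x (t - x)%N) w)%:E : \bar R).
Proof.
apply: emeasurable_sum => x; apply/measurable_EFinP.
by apply: measurable_funM => //; exact/measurable_indic/measurable_pair_event.
Qed.

Lemma measurable_fun_pair (g : nat -> nat -> R) : (forall x y, 0 <= g x y) ->
  measurable_fun [set: T] (fun w => g (X w) (Y w)).
Proof.
move=> g_ge0; apply/measurable_EFinP.
rewrite (_ : EFin \o _ = fun w => \sum_(t <oo | t \in xpredT)
  \sum_(x < t.+1) (g x (t - x)%N * \1_(pair_event x (t - x)%N) w)%:E)%E.
  apply: ge0_emeasurable_sum => [t w _ _|t _]; last exact: measurable_fun_pair_terms.
  by apply: sume_ge0 => x _; rewrite lee_fin mulr_ge0.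
by apply/funext => w /=; rewrite fun_pair_nneseries.
Qed.

Lemma integral_fun_pair (g : nat -> nat -> R) : (forall x y, 0 <= g x y) ->
  (\int[P]_w (g (X w) (Y w))%:E =
   \sum_(t <oo) (\sum_(x < t.+1) g x (t - x)%N * f x (t - x)%N)%:E)%E.
Proof.
move=> g_ge0; under eq_integral do rewrite fun_pair_nneseries //.
rewrite integral_nneseries => [||t|t w _]; last first.
- by apply: sume_ge0 => x _; rewrite lee_fin mulr_ge0.
- exact: measurable_fun_pair_terms.
- by [].
apply: eq_eseriesr => t _; rewrite ge0_integral_sum => [||x|x w _]; last first.
- by rewrite lee_fin mulr_ge0.
- apply/measurable_EFinP/measurable_funM => //.
  exact/measurable_indic/measurable_pair_event.
- by [].
rewrite -sumEFin; apply: eq_bigr => x _.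
under eq_integral do rewrite EFinM.
rewrite ge0_integralZl_EFin //; last first.
  exact/measurable_EFinP/measurable_indic/measurable_pair_event.
rewrite integral_indic // ?setIT; last exact: measurable_pair_event.
transitivity ((g x (t - x)%N)%:E * (f x (t - x)%N)%:E)%E.
  by congr (_ * _)%E; exact: XY_mass.
by rewrite -EFinM.
Qed.

End pair_of_counts.

Lemma Zstat_shift_ge0 (R : realType) (m1 m2 : R) x y :
  0 <= Zstat m1 m2 x y + (m1 ^+ 2 + m2 ^+ 2).
Proof.
rewrite /Zstat; case: eqP => [_|xy_neq0]; first by rewrite add0r addr_ge0 ?sqr_ge0.
have xy_gt0 : 0 < (x + y)%N%:R :> R by rewrite ltr0n lt0n; apply/eqP.
have -> : ((m2 * x%:R - m1 * y%:R) ^+ 2 - (m2 ^+ 2 * x%:R + m1 ^+ 2 * y%:R)) / (x + y)%N%:R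
    + (m1 ^+ 2 + m2 ^+ 2) =
    ((m2 * x%:R - m1 * y%:R) ^+ 2 + (m1 ^+ 2 * x%:R + m2 ^+ 2 * y%:R)) / (x + y)%N%:R.
  by rewrite natrD in xy_gt0 *; field; rewrite gt_eqF.
apply: divr_ge0; last exact: ltW.
by rewrite addr_ge0 ?sqr_ge0 // addr_ge0 // mulr_ge0 // sqr_ge0.
Qed.

Section poisson_pair.
Context d (T : measurableType d) (R : realType) (P : probability T R).
Variables (X Y : {RV P >-> nat}) (a b m1 m2 : R).
Hypotheses (a_ge0 : 0 <= a) (b_ge0 : 0 <= b).
Hypothesis XY_mass :
  forall x y, P (pair_event X Y x y) = (poisson_mass a x * poisson_mass b y)%:E.

(* [Z + M] is nonnegative (Zstat_shift_ge0), so it can be integrated termwise. *)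
Let M := m1 ^+ 2 + m2 ^+ 2.
Let Zshift w := Zstat m1 m2 (X w) (Y w) + M.

Lemma integral_Zstat_shift : (\int[P]_w (Zshift w)%:E =
  (M + (m2 * a - m1 * b) ^+ 2 * poisson_inv_add2 (a + b))%:E)%E.
Proof.
rewrite (integral_fun_pair XY_mass (g := fun x y => Zstat m1 m2 x y + M)); last first.
  by move=> x y; exact: Zstat_shift_ge0.
transitivity (\sum_(t <oo) ((M * poisson_mass (a + b) t)%:E +
    (Zstat_convol (poisson_mass a) (poisson_mass b) m1 m2 t)%:E))%E.
  apply: eq_eseriesr => t _; rewrite -EFinD -convol_poisson_mass //.
  rewrite /convol /Zstat_convol mulr_sumr -big_split; congr EFin.
  by apply: eq_bigr => x _ /=; ring.
have uS := poisson_massS a_ge0; have vS := poisson_massS b_ge0.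
have ab_ge0 : 0 <= a + b by rewrite addr_ge0.
have Zconvol_SS t : Zstat_convol (poisson_mass a) (poisson_mass b) m1 m2 t.+2 =
    (m2 * a - m1 * b) ^+ 2 * (poisson_mass (a + b) t / t.+2%:R).
  by rewrite (Zstat_convolSS uS vS) convol_poisson_mass.
have Zconvol_ge0 t : 0 <= Zstat_convol (poisson_mass a) (poisson_mass b) m1 m2 t.
  case: t => [|[|t]]; rewrite ?Zstat_convol0 ?Zstat_convol1 ?Zconvol_SS //.
  by rewrite mulr_ge0 ?sqr_ge0 ?divr_ge0 ?poisson_mass_ge0.
rewrite nneseriesD => [|t _ _|t _ _]; last 2 first.
- by rewrite lee_fin mulr_ge0 ?poisson_mass_ge0 ?addr_ge0 ?sqr_ge0.
- by rewrite lee_fin.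
rewrite nneseries_scale_mass ?poisson_mass_sum1 ?addr_ge0 ?sqr_ge0 //; last first.
  exact: poisson_mass_ge0.
rewrite (nneseries_shift2 (@poisson_mass_ge0 _ _) _ (Zstat_convol0 _ _ _ _)
  (Zstat_convol1 _ _ _ _) Zconvol_SS) ?sqr_ge0 //.
by rewrite -poisson_inv_add2E // -EFinM -EFinD.
Qed.

Lemma Zstat_shift_Lfun1 : Zshift \in Lfun P 1.
Proof.
apply/Lfun1_integrable/integrableP; split.
  apply/measurable_EFinP/(measurable_fun_pair X Y (g := fun x y => Zstat m1 m2 x y + M)).
  by move=> x y; exact: Zstat_shift_ge0.
under eq_integral do rewrite /= ger0_norm ?Zstat_shift_ge0 //.
by rewrite integral_Zstat_shift ltry.
Qed.

Let Zshift_subE : (fun w => Zstat m1 m2 (X w) (Y w)) = Zshift \- cst M.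
Proof. by apply/funext => w; rewrite /Zshift /= addrK. Qed.

Lemma Zstat_pair_Lfun1 : (fun w => Zstat m1 m2 (X w) (Y w)) \in Lfun P 1.
Proof. by rewrite Zshift_subE rpredB ?Lfun_cst ?Zstat_shift_Lfun1. Qed.

Lemma expectation_Zstat_pair : ('E_P[fun w => Zstat m1 m2 (X w) (Y w)] =
  ((m2 * a - m1 * b) ^+ 2 * poisson_inv_add2 (a + b))%:E)%E.
Proof.
rewrite Zshift_subE expectationB ?Lfun_cst ?Zstat_shift_Lfun1 // expectation_cst.
by rewrite unlock integral_Zstat_shift -EFinB addrC addKr.
Qed.

End poisson_pair.

Lemma expectation_bigsum d (T : measurableType d) (R : realType) (P : probability T R)
    (I : finType) (A : {set I}) (F : I -> T -> R) :
  (forall i, F i \in Lfun P 1) ->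
  ('E_P[fun w => (\sum_(i in A) F i w)%R] = \sum_(i in A) 'E_P[F i])%E.
Proof.
move=> F_Lfun; rewrite -fct_sumE -big_enum -(big_map F xpredT id) expectation_sum.
  by rewrite big_map big_enum.
by move=> G /mapP[i _ ->].
Qed.

Lemma sqr_tangent_le (R : realFieldType) (x s v th : R) : 0 < v -> v^-1 <= s ->
  2 * th * x - th ^+ 2 * v <= x ^+ 2 * s.
Proof.
move=> v_gt0 vs; apply: (@le_trans _ _ (x ^+ 2 / v)); last by rewrite ler_wpM2l ?sqr_ge0.
rewrite -subr_ge0 (_ : _ - _ = (x - th * v) ^+ 2 / v); last by field; rewrite gt_eqF.
by rewrite divr_ge0 ?sqr_ge0 ?ltW.
Qed.

Lemma sum_sqr_weighted_ge (R : realFieldType) (I : finType) (A : {set I})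
    (x v s : I -> R) (N : R) :
  0 < N -> (forall i, 0 < v i) -> (forall i, (v i)^-1 <= s i) ->
  \sum_(i in A) v i <= N ->
  (\sum_(i in A) `|x i|) ^+ 2 / N <= \sum_(i in A) x i ^+ 2 * s i.
Proof.
move=> N_gt0 v_gt0 vs sum_v_le; set U := \sum_(i in A) `|x i|.
have th_ge0 : 0 <= U / N by rewrite divr_ge0 ?sumr_ge0 ?ltW.
apply: le_trans (_ : \sum_(i in A) (2 * (U / N) * `|x i| - (U / N) ^+ 2 * v i) <= _).
  rewrite sumrB -!mulr_sumr -/U -subr_ge0.
  have -> : 2 * (U / N) * U - (U / N) ^+ 2 * \sum_(i in A) v i - U ^+ 2 / N =
      (U / N) ^+ 2 * (N - \sum_(i in A) v i) by field; rewrite gt_eqF.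
  by rewrite mulr_ge0 ?sqr_ge0 ?subr_ge0.
apply: ler_sum => i _; rewrite -[x i ^+ 2]real_normK ?num_real //.
exact: sqr_tangent_le.
Qed.

Section laws.
Context d (T : measurableType d) (R : realType) (P : probability T R).

Lemma poisson_law_mass (r : R) (Z : {RV P >-> nat}) : has_poisson_law r Z ->
  forall x, P (Z @^-1` [set x]) = (poisson_mass r x)%:E.
Proof.
move=> Z_law x; have := Z_law [set x] I; rewrite /distribution /pushforward /= => ->.
rewrite /poisson_prob /poisson_mass; case: ifP => _.
  by rewrite esum_set1 // lee_fin poisson_pmf_ge0.
rewrite diracE; have [->|x_neq0] := eqVneq x 0%N; first by rewrite mem_set.
by rewrite memNset // => x_eq0; rewrite x_eq0 eqxx in x_neq0.
Qed.

Lemma mutually_independent2 (K : finType) (V : K -> {RV P >-> nat}) i j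
    (B B' : set nat) :
  mutually_independent V -> i != j ->
  P (V i @^-1` B `&` V j @^-1` B') = (P (V i @^-1` B) * P (V j @^-1` B'))%E.
Proof.
move=> V_indep ij_neq; pose C k := if k == i then B else B'.
have := V_indep [set i; j]%SET C (fun _ => I).
rewrite big_setU1 ?inE //= big_set1 /C eqxx eq_sym (negbTE ij_neq) => <-.
congr (P _); apply/seteqP; split => [w [Bw B'w] k|w Cw]; last first.
  split; [have := Cw i | have := Cw j]; rewrite /C /= !inE ?eqxx ?orbT;
    by [move=> /(_ isT) | rewrite eq_sym (negbTE ij_neq) => /(_ isT)].
by rewrite /= !inE /C => /orP[] /eqP ->; rewrite ?eqxx // eq_sym (negbTE ij_neq).
Qed.

End laws.

Theorem lemma3 (R : realType) (n : nat) (p q : 'I_n -> R) (m1 m2 : R)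
  (d : measure_display) (T : measurableType d) (P : probability T R)
  (X Y : 'I_n -> {RV P >-> nat}) (A : {set 'I_n}) :
  is_distribution p -> is_distribution q -> 0 < m1 -> 0 < m2 ->
  (forall i, has_poisson_law (m1 * p i) (X i)) ->
  (forall i, has_poisson_law (m2 * q i) (Y i)) ->
  mutually_independent
    (fun j : ('I_n + 'I_n)%type => match j with inl i => X i | inr i => Y i end) ->
  let S := fun w : T => \sum_(i in A) Zstat m1 m2 (X i w) (Y i w) in
  (p = q -> ('E_P[S] = 0)%E) /\
  ((m1 ^+ 2 * m2 ^+ 2 * (\sum_(i in A) `|p i - q i|) ^+ 2
     / (4 * n%:R + m1 + m2))%:E <= 'E_P[S])%E.
Proof.
move=> [p_ge0 p_sum1] [q_ge0 q_sum1] m1_gt0 m2_gt0 X_law Y_law XY_indep S.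
have a_ge0 i : 0 <= m1 * p i by rewrite mulr_ge0 // ltW.
have b_ge0 i : 0 <= m2 * q i by rewrite mulr_ge0 // ltW.
have XY_mass i x y : P (pair_event (X i) (Y i) x y) =
    (poisson_mass (m1 * p i) x * poisson_mass (m2 * q i) y)%:E.
  transitivity (P (X i @^-1` [set x]) * P (Y i @^-1` [set y]))%E.
    exact: (mutually_independent2 [set x] [set y] XY_indep (i := inl i) (j := inr i)).
  by rewrite (poisson_law_mass (X_law i)) (poisson_law_mass (Y_law i)).
pose x i := m2 * (m1 * p i) - m1 * (m2 * q i).
pose v i := m1 * p i + m2 * q i + 2.
pose s i := poisson_inv_add2 (m1 * p i + m2 * q i).
have -> : ('E_P[S] = (\sum_(i in A) x i ^+ 2 * s i)%:E)%E.
  rewrite expectation_bigsum => [|i]; last exact: Zstat_pair_Lfun1 (XY_mass i).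
  by rewrite -sumEFin; apply: eq_bigr => i _; exact: expectation_Zstat_pair.
split => [pq|].
  by rewrite big1 // => i _; rewrite /x pq mulrCA subrr expr0n mul0r.
have -> : m1 ^+ 2 * m2 ^+ 2 * (\sum_(i in A) `|p i - q i|) ^+ 2 =
    (\sum_(i in A) `|x i|) ^+ 2.
  rewrite -!exprMn mulr_sumr; congr (_ ^+ 2); apply: eq_bigr => i _.
  have -> : x i = m1 * m2 * (p i - q i) by rewrite /x; ring.
  by rewrite normrM gtr0_norm ?mulr_gt0.
rewrite lee_fin; apply: (@sum_sqr_weighted_ge _ _ A x v s) => [||i|].
- by have := ler0n R n; lra.
- by move=> i; rewrite /v; have := a_ge0 i; have := b_ge0 i; lra.
- exact: poisson_inv_add2_ge (addr_ge0 (a_ge0 i) (b_ge0 i)).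
have v_ge0 i : 0 <= v i by rewrite /v; have := a_ge0 i; have := b_ge0 i; lra.
have sum_v : \sum_(i < n) v i = m1 + m2 + 2 * n%:R.
  rewrite !big_split /= -!mulr_sumr p_sum1 q_sum1 !mulr1 sumr_const card_ord.
  lra.
apply: (@le_trans _ _ (\sum_(i < n) v i)).
  by rewrite [leRHS](bigID (mem A)) /= lerDl sumr_ge0.
by rewrite sum_v; have := ler0n R n; lra.
Qed.
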